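(* Let $f$ be a Thurston map with Hurwitz biset $B$, and suppose the natural map $B^{\otimes2}\to B^{\circ2}$, $f_1\otimes f_2\mapsto f_1\circ f_2$, is injective (hence an isomorphism). Then $\mathcal G_{f^{\circ2}}=\{a\in\mathcal G_f: f@a\in\mathcal G_f\}$.
   Context: $P\subset S^2$ finite, $\mathcal G=\mathrm{PMod}(S^2,P)$. $B$ is the set of isotopy classes rel $P$ of $g_0\circ f\circ g_1$ ($g_i$ orientation-preserving homeomorphisms fixing $P$ pointwise), a $\mathcal G$-biset with left action by post-composition and right action by pre-composition; the right action is free. $B^{\circ2}=\{f_1\circ f_2:f_i\in B\}$. $B^{\otimes2}=(B\times B)/\sim$ where $(f_1\circ g,f_2)\sim(f_1,g\circ f_2)$ for $g\in\mathcal G$, with class written $f_1\otimes f_2$. For a map $F$ in such a biset, $\mathcal G_F=\{a\in\mathcal G:\exists b\in\mathcal G,\ a\circ F=F\circ b\}$ (isotopy rel $P$); for $a\in\mathcal G_f$, $f@a$ denotes the unique $b\in\mathcal G$ with $a\circ f=f\circ b$. *)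

(* Abstract algebraic model of the setting of Lemma 3.1:
   isotopy classes rel P of maps of (S^2,P) under composition, the pure
   mapping class group G = PMod(S^2,P) inside them, and the Hurwitz biset of f. *)
From Stdlib Require Import Relations Relation_Operators.

Record MapSetting := {
  carrier :> Type;
  comp : carrier -> carrier -> carrier;     (* comp x y = x o y *)
  idm : carrier;
  comp_assoc : forall x y z, comp x (comp y z) = comp (comp x y) z;
  comp_id_l : forall x, comp idm x = x;
  comp_id_r : forall x, comp x idm = x;
  inG : carrier -> Prop;
  inG_id : inG idm;
  inG_comp : forall a b, inG a -> inG b -> inG (comp a b);
  inG_inv : forall a, inG a -> exists a', inG a' /\ comp a a' = idm /\ comp a' a = idm
}.

Arguments comp {_} _ _.
Arguments inG {_} _.

Section Defs.
Variable S : MapSetting.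

Definition biset (f : S) (h : S) : Prop :=
  exists g0 g1, inG g0 /\ inG g1 /\ h = comp g0 (comp f g1).

Definition right_free (f : S) : Prop :=
  forall h g g', biset f h -> inG g -> inG g' -> comp h g = comp h g' -> g = g'.

Definition tensor_step (f : S) (p q : S * S) : Prop :=
  exists f1 f2 g, biset f f1 /\ biset f f2 /\ inG g /\
    p = (comp f1 g, f2) /\ q = (f1, comp g f2).

Definition tensor_eq (f : S) : relation (S * S) :=
  clos_refl_sym_trans (S * S) (tensor_step f).

Definition tensor_comp_injective (f : S) : Prop :=
  forall x1 x2 y1 y2, biset f x1 -> biset f x2 -> biset f y1 -> biset f y2 ->
    comp x1 x2 = comp y1 y2 -> tensor_eq f (x1, x2) (y1, y2).

Definition stab (F : S) (a : S) : Prop :=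
  inG a /\ exists b, inG b /\ comp a F = comp F b.

End Defs.

(* If a o f o f = f o f o c, injectivity of B (x) B -> B^{o2} gives
   (a o f) (x) f = f (x) (f o c) in B (x) B.  The property "the pair has the
   form (f o g, x) with g in G and g o x = f o c" is invariant under the moves
   (f1 o g, f2) ~ (f1, g o f2) and holds for f (x) (f o c); hence it holds for
   (a o f, f), and its witness g satisfies a o f = f o g and g o f = f o c. *)
From Stdlib Require Import Relations Relation_Operators.

Section HurwitzBiset.

Variables (S : MapSetting) (f : S).

Lemma biset_self : biset S f f.
Proof.
  exists (idm S), (idm S). repeat split; try apply inG_id.
  now rewrite comp_id_r, comp_id_l.
Qed.

Lemma biset_compGl (g : S) : inG g -> biset S f (comp g f).
Proof.
  intros Hg. exists g, (idm S). repeat split; auto using inG_id.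
  now rewrite comp_id_r.
Qed.

Lemma biset_compGr (g : S) : inG g -> biset S f (comp f g).
Proof.
  intros Hg. exists (idm S), g. repeat split; auto using inG_id.
  now rewrite comp_id_l.
Qed.

Definition tensor_left_f (x : S) (p : S * S) : Prop :=
  exists g, inG g /\ fst p = comp f g /\ comp g (snd p) = x.

Lemma tensor_left_f_step (x : S) (p q : S * S) :
  tensor_step S f p q -> (tensor_left_f x p <-> tensor_left_f x q).
Proof.
  intros (f1 & f2 & g & _ & _ & Hg & -> & ->); unfold tensor_left_f; simpl.
  destruct (inG_inv S g Hg) as (g' & Hg' & Hgg' & Hg'g).
  split; intros (h & Hh & E1 & E2).
  - exists (comp h g'). split; [now apply inG_comp|]. split.
    + now rewrite comp_assoc, <- E1, <- comp_assoc, Hgg', comp_id_r.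
    + now rewrite <- comp_assoc, (comp_assoc _ g' g f2), Hg'g, comp_id_l.
  - exists (comp h g). split; [now apply inG_comp|]. split.
    + now rewrite E1, comp_assoc.
    + now rewrite <- comp_assoc.
Qed.

Lemma tensor_left_f_eq (x : S) (p q : S * S) :
  tensor_eq S f p q -> (tensor_left_f x p <-> tensor_left_f x q).
Proof.
  induction 1; [now apply tensor_left_f_step | tauto | tauto | tauto].
Qed.

Lemma stab_sq_shift (a : S) :
  tensor_comp_injective S f -> stab S (comp f f) a ->
  exists b, inG b /\ comp a f = comp f b /\ stab S f b.
Proof.
  intros Hinj (Ha & c & Hc & Eac).
  assert (Htensor : tensor_eq S f (comp a f, f) (f, comp f c)).
  { apply Hinj; auto using biset_self, biset_compGl, biset_compGr.
    now rewrite <- comp_assoc, Eac, comp_assoc. }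
  assert (Hf : tensor_left_f (comp f c) (f, comp f c)).
  { exists (idm S). repeat split; auto using inG_id; simpl.
    - now rewrite comp_id_r.
    - now rewrite comp_id_l. }
  apply (tensor_left_f_eq _ _ _ Htensor) in Hf.
  destruct Hf as (b & Hb & Eab & Ebc); simpl in *.
  exists b. repeat split; auto. exists c; auto.
Qed.

Lemma stab_sq_of_shift (a b : S) :
  inG a -> comp a f = comp f b -> stab S f b -> stab S (comp f f) a.
Proof.
  intros Ha Eab (_ & c & Hc & Ebc). split; auto. exists c. split; auto.
  now rewrite comp_assoc, Eab, <- comp_assoc, Ebc, comp_assoc.
Qed.

End HurwitzBiset.

Theorem lemma3p1 (S : MapSetting) (f : S)
  (Hfree : right_free S f) (Hinj : tensor_comp_injective S f) :
  forall a : S,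
    stab S (comp f f) a <->
    (stab S f a /\ exists b, inG b /\ comp a f = comp f b /\ stab S f b).
Proof.
  intros a. split.
  - intros Hsq.
    destruct (stab_sq_shift S f a Hinj Hsq) as (b & Hb & Eab & Hstab).
    split.
    + split; [apply Hsq | now exists b].
    + now exists b.
  - intros ((Ha & _) & b & _ & Eab & Hstab).
    now apply (stab_sq_of_shift S f a b).
Qed.
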